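(* Let $q$ be an odd prime power with characteristic $p$, and let \[ h(t)=\frac{(t-2)(t^{q^2-1}-1)}{(t^{q-1}-1)(t^q-t^{q-1}-1)}\in\mathbb F_p(t). \] Then \[ h(t)=t^{(q-1)^2}+\sum_{\substack{\alpha,\beta\ge 0\\ \beta\le q-2\\ 0<\alpha+\beta\le q-1}}\Bigl[2^{\alpha+\beta}\binom{2(q-1)-\alpha-\beta}{q-1}-\binom{\alpha+\beta}{\alpha}\Bigr]t^{(q-1)^2-(\alpha+\beta q)}, \] with integer coefficients interpreted in $\mathbb F_p$ (in particular $h(t)\in\mathbb F_p[t]$).
   Context: For integers $m\ge 0$ and $k$, $\binom mk$ is the usual binomial coefficient, equal to $0$ unless $0\le k\le m$. *)

From HB Require Import structures.
From mathcomp Require Import all_boot all_order all_algebra all_field.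
Set Implicit Arguments. Unset Strict Implicit. Unset Printing Implicit Defensive.
Import Order.TTheory GRing.Theory Num.Theory.
Local Open Scope ring_scope.

Definition hnum (F : fieldType) (q : nat) : {poly F} :=
  ('X - 2%:P) * ('X^(q ^ 2 - 1) - 1).

Definition hden (F : fieldType) (q : nat) : {poly F} :=
  ('X^(q.-1) - 1) * ('X^q - 'X^(q.-1) - 1).

Definition hcoef (q a b : nat) : int :=
  ((2 ^ (a + b) * 'C(2 * q.-1 - (a + b), q.-1))%:Z - ('C(a + b, a))%:Z)%R.

Definition hrhs (F : fieldType) (q : nat) : {poly F} :=
  'X^(q.-1 ^ 2) +
  \sum_(a < q) \sum_(b < q.-1 | (0 < a + b)%N && (a + b <= q.-1)%N)
     ((hcoef q a b)%:~R)%:P * 'X^(q.-1 ^ 2 - (a + b * q)).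

From HB Require Import structures.
From mathcomp Require Import all_boot all_order all_algebra all_field.
From mathcomp Require Import zify ring.
Import GRing.Theory.
Local Open Scope ring_scope.

(* Put y = t^(q-1), so that y^q = t^(q(q-1)) =: Z.  In characteristic p,
   2^(q-1) = 1 and C(2(q-1) - s, q-1) = 0 for 0 < s < q-1 (Lucas), so the
   coefficient of index (a, b) reduces to [a+b = q-1] - C(a+b, a).  Summing
   along the diagonals a + b = s turns y * RHS into
     2 Z + sum_(a < q) y^a - sum_(s < q) t^(q(q-1-s)) (y+1)^s,
   and the two sums are quotients: the first is (Z - 1)/(y - 1), the second,
   by Frobenius, is ((t y)^q - (y+1)^q)/(t y - y - 1) = (t y Z - Z - 1)/(t^q - y - 1).
   Clearing the denominators leaves a ring identity. *)

Lemma big_triangle_diag (V : nmodType) N (F : nat -> nat -> V) :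
  \sum_(a < N.+1) \sum_(b < N.+1 | (a + b <= N)%N) F a b =
  \sum_(s < N.+1) \sum_(a < s.+1) F a (s - a)%N.
Proof.
have row a : (a <= N)%N -> \sum_(b < N.+1 | (a + b <= N)%N) F a b =
    \sum_(s < N.+1 | (a <= s)%N) F a (s - a)%N.
  move=> aN.
  rewrite -(big_mkord (fun b => a + b <= N)%N (F a)).
  rewrite -(big_mkord (fun s => a <= s)%N (fun s => F a (s - a)%N)).
  rewrite (big_cat_nat _ (n := N.+1 - a)) //=; last by lia.
  rewrite [X in _ + X]big_nat_cond [X in _ + X]big_pred0 ?addr0; last first.
    by move=> i; apply/negbTE; lia.
  rewrite [RHS](big_cat_nat _ (n := a)) //=; last by lia.
  rewrite [X in _ = X + _]big_nat_cond [X in _ = X + _]big_pred0 ?add0r; last first.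
    by move=> i; apply/negbTE; lia.
  rewrite -[in RHS](add0n a) big_addn add0n big_nat_cond [RHS]big_nat_cond.
  by apply: eq_big => i; [apply/idP/idP; lia | rewrite addnK].
have col s : (s <= N)%N ->
    \sum_(a < N.+1 | (a <= s)%N) F a (s - a)%N = \sum_(a < s.+1) F a (s - a)%N.
  by move=> sN; rewrite (big_ord_widen_cond N.+1 xpredT (fun a => F a (s - a)%N)).
rewrite (eq_bigr _ (fun (a : 'I_N.+1) _ => row a (ltn_ord a))).
rewrite (exchange_big_dep xpredT) //=.
by apply: eq_bigr => s _; exact: col (ltn_ord s).
Qed.

Lemma big_triangle_corners (V : nmodType) N (F : nat -> nat -> V) :
  \sum_(a < N.+2) \sum_(b < N.+2 | (a + b <= N.+1)%N) F a b =
  F 0%N 0%N + F 0%N N.+1 +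
    \sum_(a < N.+2) \sum_(b < N.+1 | (0 < a + b <= N.+1)%N) F a b.
Proof.
have row0 : \sum_(b < N.+2 | (b <= N.+1)%N) F 0%N b =
    F 0%N 0%N + F 0%N N.+1 + \sum_(b < N.+1 | (0 < b <= N.+1)%N) F 0%N b.
  rewrite (eq_bigl (fun=> true)); last exact: ltn_ord.
  rewrite big_ord_recr /= (bigD1 ord0) //= addrAC.
  congr (_ + _); apply: eq_bigl => b.
  by rewrite -val_eqE /= lt0n (ltnW (ltn_ord b)) andbT.
have rowS (i : 'I_N.+1) :
    \sum_(b < N.+2 | (lift ord0 i + b <= N.+1)%N) F (lift ord0 i) b =
    \sum_(b < N.+1 | (0 < lift ord0 i + b <= N.+1)%N) F (lift ord0 i) b.
  rewrite big_mkcond big_ord_recr /= -big_mkcond ifN ?addr0 //.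
  by rewrite -ltnNge /bump leq0n; lia.
rewrite [LHS]big_ord_recl [in RHS]big_ord_recl row0 (eq_bigr _ (fun i _ => rowS i)).
by rewrite [RHS]addrA.
Qed.

Lemma coef_Xadd1_exp (R : nzRingType) n i : (('X + 1 : {poly R}) ^+ n)`_i = 'C(n, i)%:R.
Proof.
elim: n i => [|n IHn] i; first by rewrite expr0 coefC; case: i.
rewrite exprSr mulrDr mulr1 coefD coefMX; case: i => [|i] /=.
  by rewrite add0r IHn !bin0.
by rewrite !IHn binS natrD addrC.
Qed.

Lemma hden_neq0 (F : fieldType) q : (1 < q)%N -> hden F q != 0.
Proof.
move=> q_gt1; apply: contraTneq isT => /(congr1 (horner^~ 0)).
rewrite /hden !hornerE !expr0n /= !eqn0Ngt ltn_predRL q_gt1 (ltnW q_gt1) /=.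
by rewrite subrr !sub0r mulrNN mulr1 => /eqP; rewrite oner_eq0.
Qed.

Section PowerOfCharacteristic.

Variables (F : fieldType) (m : nat).
(* Writing q as m.+2 makes the q.-1 of the definitions reduce to m.+1. *)
Local Notation q := m.+2.
Hypothesis q_pchar : [pchar F].-nat q.

Lemma exprDn_q (x y : {poly F}) : (x + y) ^+ q = x ^+ q + y ^+ q.
Proof. by apply: exprDn_pchar; rewrite (eq_pnat _ (pchar_poly F)). Qed.

(* Compare the coefficients of t^(q-1) in (t+1)^(q+r) = (t^q+1)(t+1)^r. *)
Lemma bin_q_add_eq0 r : (r < m.+1)%N -> 'C(q + r, m.+1)%:R = 0 :> F.
Proof.
move=> r_lt; rewrite -coef_Xadd1_exp exprD exprDn_q expr1n mulrDl mul1r coefD.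
by rewrite coefXnM ltnSn add0r coef_Xadd1_exp bin_small.
Qed.

Hypothesis two_neq0 : (2 : F) != 0.

Lemma two_exp_qm1 : 2 ^+ m.+1 = 1 :> F.
Proof.
apply: (mulfI two_neq0); rewrite mulr1 -exprS.
by rewrite -[2 in LHS]/(1 + 1) exprDn_pchar // expr1n.
Qed.

Lemma hcoef_pchar a b : (0 < a + b <= m.+1)%N ->
  (hcoef q a b)%:~R = ((a + b == m.+1)%:R - 'C(a + b, a)%:R :> F).
Proof.
case/andP=> _ s_le; rewrite /hcoef intrB -!pmulrn natrM /=.
have [-> | s_ne] := eqVneq (a + b)%N m.+1.
  by rewrite natrX two_exp_qm1 mul1r mul2n -addnn addnK binn.
have -> : (2 * m.+1 - (a + b) = q + (m - (a + b)))%N by lia.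
by rewrite bin_q_add_eq0 ?mulr0 //; lia.
Qed.

(* The term of t^(q-1) * hrhs of diagonal index s = a + b, with the
   coefficient reduced by [hcoef_pchar]. *)
Definition hterm (s a : nat) : {poly F} :=
  ((s == m.+1)%:R - 'C(s, a)%:R)%:P * ('X^q ^+ (m.+1 - s) * 'X^(m.+1) ^+ a).

Lemma mulX_hrhs_term a b : (b < m.+1)%N -> (0 < a + b <= m.+1)%N ->
  'X^(m.+1) * ((hcoef q a b)%:~R%:P * 'X^(m.+1 ^ 2 - (a + b * q))) = hterm (a + b) a.
Proof.
move=> b_lt s_bd; rewrite hcoef_pchar // mulrCA -exprD /hterm -!exprM -exprD.
by congr (_ * 'X^_); move: b_lt s_bd; nia.
Qed.

Lemma sum_hterm :
  \sum_(s < q) \sum_(a < s.+1) hterm s a =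
  \sum_(a < q) 'X^(m.+1) ^+ a - \sum_(s < q) 'X^q ^+ (m.+1 - s) * ('X^(m.+1) + 1) ^+ s.
Proof.
rewrite /hterm; under eq_bigr do under eq_bigr do rewrite polyCB mulrBl.
under eq_bigr do rewrite sumrB; rewrite sumrB; congr (_ - _).
  rewrite big_ord_recr /= big1 ?add0r => [|s _]; last first.
    by apply: big1 => a _; rewrite ltn_eqF // mul0r.
  by apply: eq_bigr => a _; rewrite eqxx mul1r subnn expr0 mul1r.
apply: eq_bigr => s _; rewrite exprD1n mulr_sumr; apply: eq_bigr => a _.
by rewrite rmorph_nat mulr_natl mulrnAr.
Qed.

Lemma mulX_hrhs :
  'X^(m.+1) * hrhs F q = 'X^(m.+1 * q) *+ 2 + \sum_(a < q) 'X^(m.+1) ^+ a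
    - \sum_(s < q) 'X^q ^+ (m.+1 - s) * ('X^(m.+1) + 1) ^+ s.
Proof.
have corner00 : hterm 0%N 0%N = - 'X^(m.+1 * q).
  by rewrite /hterm bin0 sub0r polyCN mulN1r subn0 expr0 mulr1 -exprM mulnC.
have corner0m : hterm m.+1 0%N = 0 by rewrite /hterm eqxx bin0 subrr mul0r.
have diag : \sum_(a < q) \sum_(b < q | (a + b <= m.+1)%N) hterm (a + b) a =
    \sum_(s < q) \sum_(a < s.+1) hterm s a.
  rewrite (big_triangle_diag _ m.+1 (fun a b => hterm (a + b) a)).
  by apply: eq_bigr => s _; apply: eq_bigr => a _; rewrite subnKC // -ltnS.
(* The range of hrhs is the triangle a + b <= q-1 minus the corners (0,0), (0,q-1). *)
have := big_triangle_corners _ m (fun a b => hterm (a + b) a).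
rewrite /= diag sum_hterm corner00 corner0m => corners.
have rows a : 'X^(m.+1) * \sum_(b < m.+1 | (0 < a + b <= m.+1)%N)
      ((hcoef q a b)%:~R)%:P * 'X^(m.+1 ^ 2 - (a + b * q)) =
    \sum_(b < m.+1 | (0 < a + b <= m.+1)%N) hterm (a + b) a.
  by rewrite mulr_sumr; apply: eq_bigr => b; apply: mulX_hrhs_term.
rewrite /hrhs /= mulrDr -exprD mulr_sumr (eq_bigr _ (fun (a : 'I_q) _ => rows a)).
have -> : (m.+1 + m.+1 ^ 2 = m.+1 * q)%N by nia.
by rewrite -addrA corners mulr2n; ring.
Qed.

Lemma geom_sum_Xqm1 :
  ('X^(m.+1) - 1) * \sum_(a < q) 'X^(m.+1) ^+ a = 'X^(m.+1 * q) - 1 :> {poly F}.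
Proof. by rewrite -subrX1 -exprM. Qed.

Lemma frobenius_sum_Xq :
  ('X^q - ('X^(m.+1) + 1)) * \sum_(s < q) 'X^q ^+ (m.+1 - s) * ('X^(m.+1) + 1) ^+ s =
  'X^(q * q) - ('X^(m.+1 * q) + 1) :> {poly F}.
Proof. by rewrite -subrXX exprDn_q expr1n -!exprM. Qed.

Lemma hnum_eq_hden_mul_hrhs : hnum F q = hden F q * hrhs F q.
Proof.
apply: (@mulfI _ 'X^(m.+1)); first by rewrite expf_neq0 // polyX_eq0.
rewrite [RHS]mulrCA mulX_hrhs.
set y := 'X^(m.+1); set Z := 'X^(m.+1 * q).
set Sy := \sum_(a < q) _; set G := \sum_(s < q) _.
have Xq : 'X^q = 'X * y by rewrite exprS.
have XqX : 'X^(q * q) = 'X * y * Z by rewrite -Xq -exprD; congr 'X^_; nia.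
have Xq2 : 'X^(q ^ 2 - 1) = y * Z by rewrite -exprD; congr 'X^_; nia.
have geom : (y - 1) * Sy = Z - 1 := geom_sum_Xqm1.
have frob : ('X * y - (y + 1)) * G = 'X * y * Z - (Z + 1).
  by rewrite -XqX; exact: frobenius_sum_Xq.
rewrite /hnum /hden Xq2 Xq.
have -> : (y - 1) * ('X * y - y - 1) * (Z *+ 2 + Sy - G) =
    (y - 1) * ('X * y - y - 1) * (Z *+ 2) + ('X * y - y - 1) * ((y - 1) * Sy)
    - (y - 1) * (('X * y - (y + 1)) * G) by ring.
by rewrite geom frob; ring.
Qed.

Lemma h_fraction_expansion :
  tofrac (hnum F q) / tofrac (hden F q) = tofrac (hrhs F q) :> {fraction {poly F}}.
Proof.
rewrite hnum_eq_hden_mul_hrhs rmorphM mulrAC divff ?mul1r //.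
by rewrite tofrac_eq0 hden_neq0.
Qed.

End PowerOfCharacteristic.

Theorem lemma2p3 (p k : nat) (Hp : prime p) (Hodd : odd p) (Hk : (0 < k)%N) :
  let q := (p ^ k)%N in
  (tofrac (hnum 'F_p q)) / (tofrac (hden 'F_p q))
    = tofrac (hrhs 'F_p q) :> {fraction {poly 'F_p}}.
Proof.
move=> q; have pchar_p := pchar_Fp Hp.
have p_gt2 : (2 < p)%N by case: p Hp Hodd {pchar_p q} => [|[|[|]]].
have [m q_eq] : exists m, q = m.+2.
  have : (p <= q)%N by rewrite -[X in (X <= _)%N](expn1 p) leq_exp2l ?prime_gt1.
  by exists q.-2; lia.
have q_pchar : [pchar 'F_p].-nat q.
  by rewrite (eq_pnat _ (pcharf_eq pchar_p)) pnatX pnat_id.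
have two_neq0 : (2 : 'F_p) != 0.
  by rewrite -(dvdn_pcharf pchar_p); apply/negP => /dvdn_leq; lia.
by rewrite q_eq in q_pchar *; exact: h_fraction_expansion.
Qed.
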